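(* Let $M\ge 0$, $k\ge 1$ and $m\ge 0$ be integers. Let $\mathcal{P}_M(k,m)$ be the set of partitions $\pi=(\lambda_1,\dots,\lambda_M)$ into exactly $M$ parts with smallest part $\lambda_M\ge k$ and $\lambda_i-\lambda_{i+1}\ge m$ for $1\le i\le M-1$ (for $M=0$, $\mathcal{P}_0(k,m)$ consists only of the empty partition). For $\pi\in\mathcal{P}_M(k,m)$ define \[\omega_{k,m}(\pi):=(\lambda_M+1-k)\prod_{i=1}^{M-1}(\lambda_i-\lambda_{i+1}+1-m),\] with $\omega_{k,m}$ of the empty partition equal to $1$. Then \[\sum_{\pi\in\mathcal{P}_M(k,m)}\omega_{k,m}(\pi)\,q^{|\pi|}=\frac{q^{m\binom{M}{2}+kM}}{(q;q)_M^2}.\]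
   Context: A partition is a finite weakly decreasing sequence of positive integers; $|\pi|$ is the sum of its parts. $(a;q)_L=\prod_{n=0}^{L-1}(1-aq^n)$. *)

From mathcomp Require Import all_boot all_order all_algebra.
Set Implicit Arguments. Unset Strict Implicit. Unset Printing Implicit Defensive.
Import GRing.Theory.
Local Open Scope ring_scope.

(* A partition into exactly M parts is encoded as the sequence
   [:: lambda_1; ...; lambda_M] of its parts (largest first). *)

Definition inP (M k m : nat) (s : seq nat) : bool :=
  [&& size s == M,
      [forall i : 'I_M.-1, nth 0%N s i.+1 + m <= nth 0%N s i]%N &
      (if s is x :: t then k <= last x t else true)%N].

Definition omega (k m : nat) (s : seq nat) : nat :=
  match s with
  | [::] => 1%N
  | x :: t => ((last x t + 1 - k) *
               \prod_(i < size t) (nth 0%N s i - nth 0%N s i.+1 + 1 - m))%N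
  end.

Definition psize (s : seq nat) : nat := sumn s.

(* coefficient of q^n in sum_{pi in P_M(k,m)} omega(pi) q^|pi| ;
   every part of a partition of n is <= n, so parts range over 'I_n.+1 *)
Definition Pcoef (M k m n : nat) : int :=
  (\sum_(f : {ffun 'I_M -> 'I_n.+1}
         | inP M k m [seq nat_of_ord (f i) | i <- enum 'I_M]
           && (psize [seq nat_of_ord (f i) | i <- enum 'I_M] == n))
     (omega k m [seq nat_of_ord (f i) | i <- enum 'I_M])%:R).

Definition Pgen_trunc (M k m N : nat) : {poly int} :=
  \sum_(n < N) Pcoef M k m n *: 'X^n.

Definition qpoch (M : nat) : {poly int} := \prod_(j < M) (1 - 'X^(j.+1)).

From mathcomp Require Import all_boot all_order all_algebra.
From mathcomp Require Import zify ring.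
Set Implicit Arguments. Unset Strict Implicit. Unset Printing Implicit Defensive.
Import GRing.Theory.
Local Open Scope ring_scope.

(* Removing the smallest part x >= k of a partition in P_{M+1}(k,m) leaves a
   partition in P_M(x+m,m) and divides omega_{k,m} by x+1-k.  By induction the
   generating function of P_{M+1}(k,m) is therefore
     sum_{x>=k} (x+1-k) q^x q^{m C(M,2) + (x+m) M} / (q;q)_M^2
   = q^{m C(M,2) + m M} q^{k(M+1)} / ((q;q)_M^2 (1-q^{M+1})^2),
   using sum_{x>=k} (x+1-k) y^x = y^k/(1-y)^2.  All identities are checked on
   coefficients below a fixed degree N, where the truncations are exact. *)

Section SumSeqs.
Variable R : nmodType.

(* The sum of F over the sequences of length M with entries < B; the last
   entry is the innermost summation variable. *)
Fixpoint sum_seqs (M B : nat) (F : seq nat -> R) : R :=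
  if M is M'.+1 then sum_seqs M' B (fun s => \sum_(x < B) F (rcons s x)) else F [::].

Lemma eq_sum_seqs M B (F G : seq nat -> R) :
  F =1 G -> sum_seqs M B F = sum_seqs M B G.
Proof.
elim: M F G => [|M IH] F G eqFG /=; first exact: eqFG.
by apply: IH => s; apply: eq_bigr => x _.
Qed.

Lemma sum_ffun_seqs M B (F : seq nat -> R) :
  \sum_(f : {ffun 'I_M -> 'I_B}) F [seq nat_of_ord (f i) | i <- enum 'I_M]
  = sum_seqs M B F.
Proof.
elim: M F => [|M IH] F /=.
  by rewrite enum_ord0 /= sumr_const card_ffun !card_ord expn0.
rewrite -IH.
pose join (p : {ffun 'I_M -> 'I_B} * 'I_B) : {ffun 'I_M.+1 -> 'I_B} :=
  [ffun i => if unlift ord_max i is Some j then p.1 j else p.2].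
pose split (f : {ffun 'I_M.+1 -> 'I_B}) := ([ffun j => f (lift ord_max j)], f ord_max).
have joinK : cancel join split.
  case=> g x; rewrite /join /split /=; congr (_, _); last by rewrite ffunE unlift_none.
  by apply/ffunP => j; rewrite !ffunE liftK.
have splitK : cancel split join.
  move=> f; apply/ffunP => i; rewrite /join /split ffunE /=.
  by case: unliftP => [j ->|->]; rewrite ?ffunE.
rewrite (reindex join); last by apply: onW_bij; exists split.
rewrite -(pair_big xpredT xpredT
  (fun g x => F [seq nat_of_ord (join (g, x) i) | i <- enum 'I_M.+1])) /=.
apply: eq_bigr => g _; apply: eq_bigr => x _; congr F.
rewrite enum_ordSr map_rcons -map_comp /join ffunE unlift_none; congr rcons.
apply: eq_map => j /=; rewrite ffunE.
have -> : widen_ord (leqnSn M) j = lift ord_max j.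
  by apply: val_inj; rewrite /= /bump leqNgt ltn_ord.
by rewrite liftK.
Qed.

Lemma sum_seqs_sum M B K (F : nat -> seq nat -> R) :
  sum_seqs M B (fun s => \sum_(x < K) F x s) = \sum_(x < K) sum_seqs M B (F x).
Proof.
elim: M F => [|M IH] F //=.
rewrite -(IH (fun x s => \sum_(y < B) F x (rcons s y))).
by apply: eq_sum_seqs => s; apply: exchange_big.
Qed.

Lemma big_ord_trunc B n (F : nat -> R) : (n < B)%N ->
  (forall x, (n < x)%N -> F x = 0) -> \sum_(x < B) F x = \sum_(x < n.+1) F x.
Proof.
move=> ltnB F0; rewrite (big_ord_widen B F ltnB) [RHS]big_mkcond /=.
apply: eq_bigr => i _; case: ifP => // /negbT; rewrite -leqNgt; exact: F0.
Qed.

Lemma sum_seqs_bound M B B' n (F : seq nat -> R) : (n < B)%N -> (n < B')%N ->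
  (forall s, (n < sumn s)%N -> F s = 0) -> sum_seqs M B F = sum_seqs M B' F.
Proof.
move=> ltnB ltnB'; elim: M F => [|M IH] F F0 //=.
have trunc B1 : (n < B1)%N -> forall s : seq nat,
    \sum_(x < B1) F (rcons s x) = \sum_(x < n.+1) F (rcons s x).
  move=> ltnB1 s; apply: (@big_ord_trunc B1 n (fun x => F (rcons s x))) => // x ltnx.
  by apply: F0; rewrite sumn_rcons ltn_addl.
rewrite (eq_sum_seqs M B (trunc B ltnB)) (eq_sum_seqs M B' (trunc B' ltnB')).
apply: IH => s lts; apply: big1 => x _.
by apply: F0; rewrite sumn_rcons ltn_addr.
Qed.

End SumSeqs.

Lemma sum_seqs_mull (R : pzSemiRingType) M B (c : R) F :
  sum_seqs M B (fun s => c * F s) = c * sum_seqs M B F.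
Proof.
elim: M F => [|M IH] F //=.
by rewrite -IH; apply: eq_sum_seqs => s; rewrite mulr_sumr.
Qed.

Lemma inPE M k m s : inP M k m s = (size s == M) &&
  (if s is y :: t then path (fun a b => b + m <= a)%N y t && (k <= last y t)%N else true).
Proof.
rewrite /inP; case: eqP => [<-|] //=; case: s => [|y t] /=.
  by rewrite andbT; apply/forallP => -[].
congr andb; apply/forallP/(pathP 0%N) => gaps.
  by move=> i lti; apply: (gaps (Ordinal lti)).
by move=> i; apply: gaps.
Qed.

Lemma inP_rcons M k m s x :
  inP M.+1 k m (rcons s x) = (k <= x)%N && inP M (x + m) m s.
Proof.
rewrite !inPE size_rcons eqSS.
case: s => [|y t] /=; first by rewrite andbT andbC.
rewrite rcons_path last_rcons.
by case: (k <= x)%N; rewrite ?andbT ?andbF.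
Qed.

Fixpoint gap_weight (m y : nat) (t : seq nat) : nat :=
  if t is z :: t' then ((y - z + 1 - m) * gap_weight m z t')%N else 1%N.

Lemma omega_cons k m y t :
  omega k m (y :: t) = ((last y t + 1 - k) * gap_weight m y t)%N.
Proof.
rewrite /omega; congr muln.
elim: t y => [|z t IH] y /=; first by rewrite big_ord0.
by rewrite big_ord_recl /= IH.
Qed.

Lemma gap_weight_rcons m y t x :
  gap_weight m y (rcons t x) = (gap_weight m y t * (last y t - x + 1 - m))%N.
Proof.
elim: t y => [|z t IH] y /=; first by rewrite mul1n muln1.
by rewrite IH mulnA.
Qed.

Lemma omega_rcons M k m s x : inP M (x + m) m s ->
  omega k m (rcons s x) = ((x + 1 - k) * omega (x + m) m s)%N.
Proof.
rewrite inPE; case: s => [_|y t /andP[_ /andP[_ lastP]]].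
  by rewrite /omega /= big_ord0 !muln1.
rewrite rcons_cons !omega_cons last_rcons gap_weight_rcons.
have -> : (last y t - x + 1 - m = last y t + 1 - (x + m))%N by move: lastP; lia.
by rewrite (mulnC (gap_weight m y t)).
Qed.

Definition Pterm M k m n (s : seq nat) : int :=
  if inP M k m s && (psize s == n) then (omega k m s)%:R else 0.

Lemma Pcoef_sum_seqs M k m n : Pcoef M k m n = sum_seqs M n.+1 (Pterm M k m n).
Proof. by rewrite /Pcoef big_mkcond -sum_ffun_seqs. Qed.

Lemma Pterm_rcons M k m n s x : Pterm M.+1 k m n (rcons s x) =
  if (x <= n)%N then (x + 1 - k)%N%:R * Pterm M (x + m)%N m (n - x)%N s else 0.
Proof.
rewrite /Pterm inP_rcons /psize sumn_rcons.
have [lekx|ltxk] /= := leqP k x; last first.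
  by case: ifP => // _; rewrite (_ : x + 1 - k = 0)%N ?mul0r //; lia.
case Ps: (inP M (x + m) m s) => /=; last by case: ifP; rewrite ?mulr0.
rewrite (omega_rcons _ Ps) natrM.
have [lexn|ltnx] := leqP x n.
  have -> : (sumn s + x == n)%N = (sumn s == n - x)%N by apply/eqP/eqP; lia.
  by case: ifP; rewrite ?mulr0.
by have -> : (sumn s + x == n)%N = false by apply/eqP; lia.
Qed.

(* Peeling off the smallest part x of a partition in P_{M+1}(k,m). *)
Lemma Pcoef_rec M k m n : Pcoef M.+1 k m n =
  \sum_(x < n.+1) (x + 1 - k)%N%:R * Pcoef M (x + m)%N m (n - x)%N.
Proof.
rewrite Pcoef_sum_seqs /=.
under eq_sum_seqs => s do under eq_bigr => x _ do rewrite Pterm_rcons -ltnS ltn_ord.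
rewrite (sum_seqs_sum M n.+1 n.+1
  (fun x s => (x + 1 - k)%N%:R * Pterm M (x + m)%N m (n - x)%N s)).
apply: eq_bigr => x _.
rewrite sum_seqs_mull Pcoef_sum_seqs; congr (_ * _).
apply: (@sum_seqs_bound _ _ _ _ (n - x)); [lia | lia |].
by move=> s lts; rewrite /Pterm /psize; case: ifP => // /andP[_ /eqP eqs]; lia.
Qed.

Section AgreeBelow.
Variables (R : nzSemiRingType) (N : nat).

Definition agree_below (p q : {poly R}) := forall i, (i < N)%N -> p`_i = q`_i.

Lemma agree_below_trans p q r :
  agree_below p q -> agree_below q r -> agree_below p r.
Proof. by move=> pq qr i ltiN; rewrite pq // qr. Qed.

Lemma agree_belowMr p q r : agree_below p q -> agree_below (p * r) (q * r).
Proof.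
move=> pq i ltiN; rewrite !coefM; apply: eq_bigr => j _; rewrite pq //.
by apply: leq_ltn_trans ltiN; rewrite -ltnS.
Qed.

Lemma agree_below_sum K (F G : 'I_K -> {poly R}) :
  (forall x, agree_below (F x) (G x)) ->
  agree_below (\sum_(x < K) F x) (\sum_(x < K) G x).
Proof. by move=> FG i ltiN; rewrite !coef_sum; apply: eq_bigr => x _; apply: FG. Qed.

Lemma agree_belowZ c p q : agree_below p q -> agree_below (c *: p) (c *: q).
Proof. by move=> pq i ltiN; rewrite !coefZ pq. Qed.

Lemma agree_belowXnM d p q : agree_below p q -> agree_below ('X^d * p) ('X^d * q).
Proof. by move=> pq i ltiN; rewrite !coefXnM; case: ifP => // _; apply: pq; lia. Qed.

End AgreeBelow.

Lemma ramp_sum_mul_sqr (R : comNzRingType) (y : R) k t :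
  (\sum_(x < k + t) (x + 1 - k)%N%:R * y ^+ x) * (1 - y) ^+ 2
  = y ^+ k - t.+1%:R * y ^+ (k + t) + t%:R * y ^+ (k + t).+1.
Proof.
elim: t => [|t IH].
  rewrite addn0 big1 ?mul0r => [|x _]; last first.
    by rewrite (_ : x + 1 - k = 0)%N ?mul0r //; have := ltn_ord x; lia.
  by rewrite addr0 mul1r subrr.
rewrite addnS big_ord_recr /= mulrDl IH (_ : k + t + 1 - k = t.+1)%N; last by lia.
rewrite !exprSr -!natr1; ring.
Qed.

Lemma ramp_series_agree (R : comNzRingType) a d k N : (0 < d)%N ->
  agree_below N ('X^a * ((\sum_(x < N) (x + 1 - k)%N%:R * 'X^d ^+ x) * (1 - 'X^d) ^+ 2))
              ('X^(a + k * d) : {poly R}).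
Proof.
move=> d_gt0 i ltiN; have lekkd : (k <= k * d)%N by rewrite leq_pmulr.
have [leNk|ltkN] := leqP N k.
  rewrite big1 ?mul0r ?mulr0 ?coef0 ?coefXn => [|x _]; first by case: eqP => //; lia.
  by rewrite (_ : x + 1 - k = 0)%N ?mul0r //; have := ltn_ord x; lia.
have [t eqN] : exists t, N = (k + t)%N by exists (N - k)%N; lia.
subst N.
rewrite ramp_sum_mul_sqr -!exprM !mulrDr mulrN !coefD coefN.
have high j c : (k + t <= j)%N -> ('X^a * (c%:R * 'X^(d * j)))`_i = 0 :> R.
  move=> lej; rewrite mulrCA mulr_natl -exprD coefMn coefXn.
  by case: eqP => [eqi|]; rewrite ?mul0rn //; exfalso; nia.
by rewrite !high ?subr0 ?addr0 // -exprD mulnC.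
Qed.

Lemma coef_Pgen_trunc M k m N i : (i < N)%N -> (Pgen_trunc M k m N)`_i = Pcoef M k m i.
Proof.
move=> ltiN; rewrite /Pgen_trunc coef_sum (bigD1 (Ordinal ltiN)) //=.
rewrite coefZ coefXn eqxx mulr1 big1 ?addr0 // => j neji; rewrite coefZ coefXn.
have -> : (i == j) = false by apply: contraNF neji => /eqP eqij; apply/eqP/val_inj.
by rewrite mulr0.
Qed.

Lemma Pgen_trunc_rec M k m N : agree_below N (Pgen_trunc M.+1 k m N)
  (\sum_(x < N) (x + 1 - k)%N%:R *: ('X^x * Pgen_trunc M (x + m)%N m N)).
Proof.
move=> i ltiN; rewrite coef_Pgen_trunc // Pcoef_rec coef_sum.
rewrite (@big_ord_trunc _ N i (fun x =>
    ((x + 1 - k)%N%:R *: ('X^x * Pgen_trunc M (x + m)%N m N))`_i)) //; last first.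
  by move=> x ltix; rewrite coefZ coefXnM ltix mulr0.
apply: eq_bigr => x _; rewrite coefZ coefXnM ltnNge -ltnS ltn_ord /=.
by rewrite coef_Pgen_trunc //; lia.
Qed.

Lemma Pgen_trunc_qpoch M k m N :
  agree_below N (Pgen_trunc M k m N * qpoch M ^+ 2) 'X^(m * 'C(M, 2) + k * M).
Proof.
elim: M k => [|M IH] k.
  rewrite /qpoch big_ord0 expr1n mulr1 => i ltiN.
  rewrite coef_Pgen_trunc // Pcoef_sum_seqs /= /Pterm inPE /= !muln0 coefXn.
  by case: i {ltiN}.
have qpochS : qpoch M.+1 ^+ 2 = qpoch M ^+ 2 * (1 - 'X^(M.+1)) ^+ 2.
  by rewrite /qpoch big_ord_recr /= exprMn.
pose e := (m * 'C(M, 2) + m * M)%N.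
have termE x : (x + 1 - k)%N%:R *: ('X^x * 'X^(m * 'C(M, 2) + (x + m) * M))
    = 'X^e * ((x + 1 - k)%N%:R * 'X^(M.+1) ^+ x) :> {poly int}.
  rewrite scaler_nat mulr_natl mulrnAr -!exprM -!exprD.
  by congr ('X^_ *+ _); nia.
rewrite qpochS mulrA; apply: agree_below_trans.
  by apply/agree_belowMr/agree_belowMr/Pgen_trunc_rec.
rewrite mulr_suml; apply: agree_below_trans.
  apply/agree_belowMr/agree_below_sum => x.
  by rewrite -scalerAl -mulrA; apply/agree_belowZ/agree_belowXnM/IH.
under eq_bigr => x _ do rewrite termE.
rewrite -mulr_sumr -mulrA.
by rewrite binS bin1 (_ : _ + k * M.+1 = e + k * M.+1)%N; [exact: ramp_series_agree | lia].
Qed.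

Unset Implicit Arguments.
Theorem theorem5 (M k m : nat) (hk : (1 <= k)%N) (N n : nat) (hn : (n < N)%N) :
  (Pgen_trunc M k m N * qpoch M ^+ 2)`_n
  = ('X^(m * 'C(M, 2) + k * M) : {poly int})`_n.
Proof. exact: Pgen_trunc_qpoch. Qed.
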